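(* Let $(U(n))_{n\geqslant 0}$ be an arithmetic progression of positive integers, $U(n)=U(0)+nd$ with $d$ an integer, and let $S(n)=\overline{U(0)U(1)\cdots U(n-1)U(n)U(n-1)\cdots U(1)U(0)}$ for $n\geqslant 0$ (so $S(0)=U(0)$; e.g. for $U(n)=n+1$ this is $1,121,12321,\ldots$). Let $l$ be a positive integer. Then for every $n\geqslant 0$ such that $U(n)$, $U(n+1)$, $U(n+2)$, $U(n+3)$ all have exactly $l$ decimal digits, $$S(n+3) - \left(1+10^l+10^{2l}\right) S(n+2) + \left(10^l+10^{2l}+10^{3l}\right) S(n+1) - 10^{3l}\, S(n) = 0.$$
   Context: For positive integers $a_0,\ldots,a_k$, $\overline{a_0a_1\cdots a_k}$ denotes the integer whose decimal expansion is the decimal expansion of $a_0$ followed by that of $a_1$, ..., followed by that of $a_k$. The sequence $S$ is the concatenation of the right-concatenation $\overline{U(0)\cdots U(n)}$ with the left-concatenation $\overline{U(n-1)\cdots U(0)}$. *)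

From mathcomp Require Import all_boot all_order all_algebra.
Set Implicit Arguments. Unset Strict Implicit. Unset Printing Implicit Defensive.

Definition ndigits (x : nat) : nat := if x == 0 then 0 else (trunc_log 10 x).+1.

Definition dconcat (a b : nat) : nat := a * 10 ^ ndigits b + b.

Definition dconcat_seq (s : seq nat) : nat := foldl dconcat 0 s.

Definition Sseq (U : nat -> nat) (n : nat) : nat :=
  dconcat_seq ([seq U i | i <- iota 0 n.+1] ++ rev [seq U i | i <- iota 0 n]).

From mathcomp Require Import all_boot all_order all_algebra.
From mathcomp Require Import ring.
Import GRing.Theory.

(* Split S(m) as \overline{U(0)...U(m)} * 10^w + \overline{U(m-1)...U(0)}, where w is
   the number of digits of the descending half. Both halves and w obey one-step
   recurrences in which only the digit counts of U(m), U(m+1) enter; when U(n),...,U(n+3)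
   all have l digits these are all x = 10^l. Expressing S(n+k), k <= 3, through the
   halves at n, U(n) and d turns the claimed relation into a polynomial identity in x. *)

Lemma foldl_dconcat (acc : nat) (s : seq nat) :
  foldl dconcat acc s = acc * 10 ^ sumn (map ndigits s) + dconcat_seq s.
Proof.
elim: s acc => [|x s IHs] acc /=; first by rewrite muln1 addn0.
rewrite [dconcat_seq (_ :: _)]/dconcat_seq /= !IHs /dconcat mul0n add0n expnD.
by rewrite mulnDl mulnA addnA.
Qed.

Lemma dconcat_seq_cat (s t : seq nat) :
  dconcat_seq (s ++ t) =
  dconcat_seq s * 10 ^ sumn (map ndigits t) + dconcat_seq t.
Proof. by rewrite /dconcat_seq foldl_cat foldl_dconcat. Qed.

Lemma dconcat_seq1 (x : nat) : dconcat_seq [:: x] = x.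
Proof. by rewrite /dconcat_seq /= /dconcat mul0n. Qed.

Section PalindromicConcatenation.

Variable U : nat -> nat.

Definition ascending_half (m : nat) : nat :=
  dconcat_seq [seq U i | i <- iota 0 m.+1].

Definition descending_half (m : nat) : nat :=
  dconcat_seq (rev [seq U i | i <- iota 0 m]).

Definition descending_width (m : nat) : nat :=
  sumn [seq ndigits (U i) | i <- iota 0 m].

Lemma map_iotaS (m : nat) :
  [seq U i | i <- iota 0 m.+1] = rcons [seq U i | i <- iota 0 m] (U m).
Proof. by rewrite -addn1 iotaD map_cat cats1. Qed.

Lemma Sseq_halves (m : nat) :
  Sseq U m = ascending_half m * 10 ^ descending_width m + descending_half m.
Proof. by rewrite /Sseq dconcat_seq_cat map_rev sumn_rev -map_comp. Qed.

Lemma ascending_halfS (m : nat) :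
  ascending_half m.+1 = ascending_half m * 10 ^ ndigits (U m.+1) + U m.+1.
Proof.
by rewrite /ascending_half map_iotaS -cats1 dconcat_seq_cat dconcat_seq1 /= addn0.
Qed.

Lemma descending_halfS (m : nat) :
  descending_half m.+1 = U m * 10 ^ descending_width m + descending_half m.
Proof.
rewrite /descending_half map_iotaS rev_rcons -cat1s dconcat_seq_cat dconcat_seq1.
by rewrite map_rev sumn_rev -map_comp.
Qed.

Lemma descending_widthS (m : nat) :
  descending_width m.+1 = ndigits (U m) + descending_width m.
Proof. by rewrite /descending_width -addn1 iotaD map_cat sumn_cat addnC /= addn0. Qed.

End PalindromicConcatenation.

Local Open Scope ring_scope.

Lemma Posz_expn (b k : nat) : (b ^ k)%N%:Z = b%:Z ^+ k.
Proof. by rewrite -!natz natrX. Qed.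

Theorem lemma3 (U : nat -> nat) (d : int) (l : nat)
  (hpos : forall n, (0 < U n)%N)
  (hap : forall n, (U n)%:Z = (U 0)%:Z + n%:Z * d)
  (hl : (0 < l)%N) (n : nat)
  (hdig : forall k, (k <= 3)%N -> ndigits (U (n + k)%N) = l) :
  (Sseq U (n + 3))%:Z
    - (1 + 10 ^+ l + 10 ^+ (2 * l)) * (Sseq U (n + 2))%:Z
    + (10 ^+ l + 10 ^+ (2 * l) + 10 ^+ (3 * l)) * (Sseq U (n + 1))%:Z
    - 10 ^+ (3 * l) * (Sseq U n)%:Z = 0 :> int.
Proof.
have U_shift k : (U (n + k)%N)%:Z = (U n)%:Z + k%:Z * d.
  by rewrite hap [in RHS]hap PoszD; ring.
have [[U1 U2] U3] := (U_shift 1%N, U_shift 2%N, U_shift 3%N).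
have [[[l0 l1] l2] l3] := (hdig 0%N isT, hdig 1%N isT, hdig 2%N isT, hdig 3%N isT).
rewrite !addnS addn0 in U1 U2 U3 l0 l1 l2 l3 *.
rewrite !Sseq_halves !ascending_halfS !descending_halfS !descending_widthS.
rewrite l0 l1 l2 l3 !(PoszD, PoszM, Posz_expn) U1 U2 U3.
rewrite !(mulnC _ l) !exprM !exprD.
ring.
Qed.
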